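(* Let $X$ be a completely regular space and $G$ an infinite open subset of $X$. Then there exist a sequence $(x_n)_{n=1}^\infty$ in $G$ and a continuous function $f:X\to[-1,1]$ such that $\operatorname{supp}f\subseteq G$, $f(x_{2k-1})=\frac1k$ and $f(x_{2k})=-\frac1k$ for all $k\in\mathbb N$.
   Context: Completely regular spaces are assumed $T_1$. For $f:X\to\mathbb R$, $\operatorname{supp}f=\{x\in X:f(x)\ne0\}$. *)

From HB Require Import structures.
From mathcomp Require Import all_boot all_order all_algebra.
From mathcomp Require Import all_classical all_reals all_analysis.
Import Order.TTheory GRing.Theory Num.Theory.
Import numFieldNormedType.Exports.
Local Open Scope classical_set_scope.
Local Open Scope ring_scope.

Definition completely_regular (R : realType) (X : topologicalType) : Prop :=
  accessible_space X /\
  forall (x : X) (B : set X), closed B -> ~ B x ->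
    exists f : X -> R, continuous f /\ (forall y, 0 <= f y <= 1) /\
      f x = 0 /\ (forall b, B b -> f b = 1).

(* supp f = {x : f x <> 0} (no closure) *)
Definition supp {R : realType} {X : Type} (f : X -> R) : set X :=
  [set x | f x != 0].

(* Peel off, one after another, pairwise disjoint nonempty open sets P_n from
   G: complete regularity separates two points of an infinite open set W by a
   continuous phi, and the overlapping pieces [phi > 1/3] and [phi < 2/3] of W
   cannot both be finite, so a nonempty open piece of W can be cut off while
   an infinite open remainder is kept for the next step.  Bumps g_n supported
   in P_n with g_n(x_n) = 1 have disjoint supports, hence f = sum_n c_n g_n,
   with c_{2k-1} = 1/k and c_{2k} = -1/k, is pointwise a single term; it is
   continuous because c_n -> 0 makes the partial sums converge uniformly. *)
From HB Require Import structures.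
From mathcomp Require Import all_boot all_order all_algebra.
From mathcomp Require Import all_classical all_reals all_analysis.
From mathcomp Require Import lra zify.
Import Order.TTheory GRing.Theory Num.Theory.
Import numFieldNormedType.Exports.
Local Open Scope classical_set_scope.
Local Open Scope ring_scope.

Section UniformApproximation.
Context {R : realType} {X : topologicalType}.

Lemma continuous_sum_fun (N : nat) (h : nat -> X -> R) :
  (forall n, continuous (h n)) -> continuous (fun y => \sum_(n < N) h n y).
Proof.
move=> hc; elim: N => [|N IH] y.
  under eq_fun do rewrite big_ord0.
  exact: cvg_cst.
under eq_fun do rewrite big_ord_recr.
by apply: cvgD; [exact: IH | exact: hc].
Qed.

Lemma uniform_approx_continuous (f : X -> R) :
  (forall e, 0 < e -> exists2 h : X -> R,
     continuous h & forall y, `|f y - h y| <= e) ->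
  continuous f.
Proof.
move=> approx y; apply/cvgrPdist_lt => e e0.
have e3 : 0 < e / 3 by rewrite divr_gt0.
have [h hc fh] := approx _ e3.
move/cvgrPdist_lt: (hc y) => /(_ _ e3); apply: filterS => z hyz.
have := ler_distD (h y) (f y) (f z); have := ler_distD (h z) (h y) (f z).
have := fh y; have := fh z; rewrite (distrC (f z)); lra.
Qed.

End UniformApproximation.

Section DisjointlySupportedSum.
Context {R : realType} {X : topologicalType}.
Variables (c : nat -> R) (g : nat -> X -> R).

Definition support_index (y : X) : nat := xget 0%N [set n | g n y != 0].

(* When the supports of the g n are pairwise disjoint, this is the pointwise
   value of the series sum_n c n * g n. *)
Definition disjoint_sum (y : X) : R :=
  c (support_index y) * g (support_index y) y.

Lemma supp_disjoint_sum : supp disjoint_sum `<=` \bigcup_n supp (g n).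
Proof.
move=> y; rewrite /supp /= mulf_eq0 negb_or => /andP[_ gy].
by exists (support_index y).
Qed.

Hypothesis g_disjoint : trivIset setT (fun n => supp (g n)).

Lemma support_indexP y n : g n y != 0 -> support_index y = n.
Proof.
move=> gny; rewrite /support_index; case: xgetP => [m -> gmy|/(_ n)//].
by apply: g_disjoint => //; exists y.
Qed.

Lemma support_index_eq0 y n : n != support_index y -> g n y = 0.
Proof. by apply: contraNeq => /support_indexP ->. Qed.

Lemma disjoint_sumE y n : g n y != 0 -> disjoint_sum y = c n * g n y.
Proof. by rewrite /disjoint_sum => /support_indexP ->. Qed.

Lemma disjoint_sum_partial N y :
  \sum_(n < N) c n * g n y =
  if (support_index y < N)%N then disjoint_sum y else 0.
Proof.
case: ifP => [yN|yN].
  rewrite (bigD1 (Ordinal yN)) //= big1 ?addr0 // => n /eqP nE.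
  rewrite support_index_eq0 ?mulr0 //; apply/eqP => nE'; apply: nE.
  exact: val_inj.
rewrite big1 // => n _; rewrite support_index_eq0 ?mulr0 //.
by apply/eqP => nE; rewrite -nE ltn_ord in yN.
Qed.

Hypothesis g_le1 : forall n y, `|g n y| <= 1.

Lemma norm_disjoint_sum_le y : `|disjoint_sum y| <= `|c (support_index y)|.
Proof. by rewrite normrM ler_piMr. Qed.

Hypotheses (g_cont : forall n, continuous (g n)) (c_cvg0 : c @ \oo --> 0).

Lemma continuous_disjoint_sum : continuous disjoint_sum.
Proof.
apply: uniform_approx_continuous => e e0.
have /cvgr0Pnorm_le/(_ _ e0) [N _ cN] := c_cvg0.
exists (fun y => \sum_(n < N) c n * g n y).
  apply: (@continuous_sum_fun _ _ N (fun n y => c n * g n y)) => n y.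
  by apply: cvgM; [exact: cvg_cst | exact: g_cont].
move=> y; rewrite disjoint_sum_partial; case: ifP => [_|/negbT].
  by rewrite subrr normr0 ltW.
rewrite -leqNgt subr0 => Ny; apply: le_trans (norm_disjoint_sum_le y) _.
exact: cN.
Qed.

End DisjointlySupportedSum.

Section AlternatingHarmonic.
Context {R : realType}.

Definition alt_harmonic (n : nat) : R :=
  (if odd n then 1 else -1) * (uphalf n)%:R^-1.

Lemma norm_alt_harmonic n : `|alt_harmonic n| = (uphalf n)%:R^-1.
Proof.
by rewrite /alt_harmonic; case: odd; rewrite ?mulN1r ?mul1r ?normrN ger0_norm.
Qed.

Lemma alt_harmonic_le1 n : `|alt_harmonic n| <= 1.
Proof.
rewrite norm_alt_harmonic; case: (uphalf n) => [|k]; first by rewrite invr0.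
by rewrite invf_le1 ?ltr0n // ler1n.
Qed.

Lemma alt_harmonic_cvg0 : alt_harmonic @ \oo --> 0.
Proof.
apply/cvgr0Pnorm_le => e e0.
have [K _ HK] := near_infty_natSinv_lt (PosNum e0).
exists K.*2.+1 => // n /= Kn; rewrite norm_alt_harmonic.
apply: le_trans (ltW (HK K (leqnn K))).
have Kn' : (K.+1 <= uphalf n)%N by rewrite geq_uphalf_double doubleS !ltnS.
by rewrite lef_pV2 ?posrE ?ltr0n ?ler_nat // (leq_trans _ Kn').
Qed.

(* For k = 0 both sides of the next two lemmas are 0, since 0^-1 = 0. *)
Lemma alt_harmonic_odd k : alt_harmonic (2 * k - 1) = k%:R^-1.
Proof.
case: k => [|k]; first by rewrite /alt_harmonic /= invr0 mulr0.
rewrite (_ : (2 * k.+1 - 1 = k.*2.+1)%N); last by rewrite -mul2n; lia.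
by rewrite /alt_harmonic /= odd_double mul1r doubleK.
Qed.

Lemma alt_harmonic_even k : alt_harmonic (2 * k) = - k%:R^-1.
Proof. by rewrite /alt_harmonic mul2n odd_double uphalf_double mulN1r. Qed.

End AlternatingHarmonic.

Section OpenSplits.
Context {X : topologicalType}.

Definition open_split (W P N : set X) : Prop :=
  [/\ open P /\ open N, P !=set0, ~ finite_set N, P `<=` W /\ N `<=` W
    & P `&` N = set0].

Lemma open_split_of_disjoint (W A B : set X) :
  open W -> open A -> open B -> A `&` B = set0 ->
  W `&` A !=set0 -> ~ finite_set (W `&` B) ->
  open_split W (W `&` A) (W `&` B).
Proof.
move=> oW oA oB AB WA WB; split => //; first by split; exact: openI.
by rewrite setIACA AB setI0.
Qed.

Lemma disjoint_open_sequence (G : set X) :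
  (forall W, open W -> ~ finite_set W -> exists P N : set X, open_split W P N) ->
  open G -> ~ finite_set G ->
  exists P : nat -> set X, [/\ forall n, open (P n), forall n, P n !=set0,
    forall n, P n `<=` G & trivIset setT P].
Proof.
move=> splitW oG iG.
have /choice [cut cutP] : forall W, exists PN : set X * set X,
    open W -> ~ finite_set W -> open_split W PN.1 PN.2.
  move=> W; have [[oW iW]|nW] := pselect (open W /\ ~ finite_set W).
    by have [P [N PN]] := splitW W oW iW; exists (P, N).
  by exists (set0, set0) => oW iW; exfalso; apply: nW.
pose Ws n := iter n (fun W => (cut W).2) G.
have Ws_split n : open_split (Ws n) (cut (Ws n)).1 (Ws n.+1).
  by elim: n => [|n [[_ oW] _ iW _ _]]; apply: cutP.
have Ws_decr m n : (m <= n)%N -> Ws n `<=` Ws m.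
  apply: (@homo_leq _ _ (fun A B => B `<=` A)) => [A|B A C BA CB|{}n].
  - exact: subset_refl.
  - exact: subset_trans CB BA.
  - by have [_ _ _ []] := Ws_split n.
exists (fun n => (cut (Ws n)).1); split.
- by move=> n; have [[]] := Ws_split n.
- by move=> n; have [] := Ws_split n.
- move=> n; have [_ _ _ [PW _] _] := Ws_split n.
  exact: subset_trans PW (Ws_decr 0%N n isT).
apply: ltn_trivIset => n m mn; apply/disjoints_subset => y Pmy Pny.
have [_ _ _ [PW _] _] := Ws_split n.
have [_ _ _ _ /disjoints_subset PmW] := Ws_split m.
exact: PmW y Pmy (Ws_decr _ _ mn y (PW y Pny)).
Qed.

End OpenSplits.

Section CompletelyRegular.
Context {R : realType} {X : topologicalType}.
Hypothesis crX : completely_regular R X.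

Lemma completely_regular_bump (U : set X) (x : X) : open U -> U x ->
  exists g : X -> R,
    [/\ continuous g, forall y, 0 <= g y <= 1, g x = 1 & supp g `<=` U].
Proof.
move=> oU Ux; have [_ sep] := crX.
have [f [cf [f01 [fx0 fU]]]] :=
  sep x (~` U) (open_closedC oU) (fun nUx => nUx Ux).
exists (fun y => 1 - f y); split.
- by move=> y; apply: cvgB; [exact: cvg_cst | exact: cf].
- by move=> y; have /andP[f0 f1] := f01 y; rewrite subr_ge0 f1 lerBlDr lerDl f0.
- by rewrite fx0 subr0.
- move=> y; rewrite /supp /= subr_eq0 => /eqP f1; apply: contrapT => nUy.
  by apply: f1; rewrite fU.
Qed.

Lemma completely_regular_bumps (P : nat -> set X) :
  (forall n, open (P n)) -> (forall n, P n !=set0) ->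
  exists (x : nat -> X) (g : nat -> X -> R), forall n,
    [/\ P n (x n), continuous (g n), forall y, `|g n y| <= 1, g n (x n) = 1
      & supp (g n) `<=` P n].
Proof.
move=> oP P0.
have /choice[xg xgP] n : exists xg : X * (X -> R), [/\ P n xg.1,
    continuous xg.2, forall y, `|xg.2 y| <= 1, xg.2 xg.1 = 1
    & supp xg.2 `<=` P n].
  have [x Px] := P0 n.
  have [g [gc g01 gx gP]] := completely_regular_bump _ _ (oP n) Px.
  exists (x, g); split => // y.
  by have /andP[g0 g1] := g01 y; rewrite ger0_norm.
by exists (fun n => (xg n).1), (fun n => (xg n).2).
Qed.

Lemma completely_regular_split (W : set X) : open W -> ~ finite_set W ->
  exists P N : set X, open_split W P N.
Proof.
move=> oW iW; have [T1 sep] := crX.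
have [a Wa] := infinite_setN0 iW.
have [b [Wb /= nba]] := infinite_setN0 (infinite_setD iW (finite_set1 a)).
have [phi [cphi [_ [phia phib]]]] :=
  sep a [set b] (@accessible_closed_set1 _ T1 b) (fun ab => nba (esym ab)).
have phib1 : phi b = 1 by exact: phib.
pose below u := phi @^-1` [set r | r < u].
pose above u := phi @^-1` [set r | u < r].
have ophi (A : set R) : open A -> open (phi @^-1` A).
  by apply: open_comp => y _; exact: cphi.
have obelow u : open (below u) by apply/ophi/open_lt.
have oabove u : open (above u) by apply/ophi/open_gt.
have below_above u : below u `&` above u = set0.
  by apply/disjoints_subset => y /= yu uy; move: (lt_trans yu uy); rewrite ltxx.
have [hi_inf|/contrapT hi_fin] := pselect (~ finite_set (W `&` above (1/3))).
  exists (W `&` below (1/3)), (W `&` above (1/3)).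
  apply: open_split_of_disjoint => //.
  by exists a; split => //; rewrite /below /= phia; lra.
exists (W `&` above (2/3)), (W `&` below (2/3)).
apply: open_split_of_disjoint => //.
- by rewrite setIC below_above.
- by exists b; split => //; rewrite /above /= phib1; lra.
- have cover : W `<=` (W `&` above (1/3)) `|` (W `&` below (2/3)).
    move=> y Wy; have [yhi|ylo] := ltP (1/3) (phi y); [left|right]; split => //.
    by rewrite /below /=; lra.
  by move=> lo_fin; apply/iW/(sub_finite_set cover); rewrite finite_setU.
Qed.

End CompletelyRegular.

Theorem lemma6p2 (R : realType) (X : topologicalType) (G : set X) :
  completely_regular R X -> open G -> ~ finite_set G ->
  exists (x : nat -> X) (f : X -> R),
    (forall n : nat, (0 < n)%N -> G (x n)) /\
    continuous f /\ (forall y, -1 <= f y <= 1) /\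
    supp f `<=` G /\
    (forall k : nat, (0 < k)%N ->
       f (x (2 * k - 1)%N) = k%:R^-1 /\ f (x (2 * k)%N) = - k%:R^-1).
Proof.
move=> crX oG iG.
have [P [oP P0 PG Pdisj]] :=
  disjoint_open_sequence G (completely_regular_split crX) oG iG.
have [x [g xgP]] := completely_regular_bumps crX _ oP P0.
have gP n : supp (g n) `<=` P n by have [] := xgP n.
have g_disj : trivIset setT (fun n => supp (g n)).
  move=> i j _ _ [y [gi gj]]; apply: Pdisj => //.
  by exists y; split; [exact: gP | exact: gP].
have g_le1 n : forall y, `|g n y| <= 1 by have [] := xgP n.
have g_cont n : continuous (g n) by have [] := xgP n.
have F_x n : disjoint_sum alt_harmonic g (x n) = alt_harmonic n.
  have [_ _ _ gx _] := xgP n.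
  by rewrite (disjoint_sumE _ _ g_disj _ n) gx ?mulr1 ?oner_eq0.
exists x, (disjoint_sum alt_harmonic g); split; [|split; [|split; [|split]]].
- by move=> n _; have [Pxn _ _ _ _] := xgP n; exact: PG Pxn.
- exact: (continuous_disjoint_sum _ _ g_disj g_le1 g_cont alt_harmonic_cvg0).
- move=> y; rewrite -ler_norml.
  exact: le_trans (norm_disjoint_sum_le _ _ g_le1 y) (alt_harmonic_le1 _).
- by move=> y /supp_disjoint_sum [n _ /gP]; exact: PG.
- by move=> k _; rewrite !F_x alt_harmonic_odd alt_harmonic_even.
Qed.
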